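(* Let $m\ge2$, $0<h<2^m$ and $k\in\mathbb{Z}_0^m$. Then: the support $\mathrm{supp}\,\tau_k$ is a strictly convex compact $(m-1)$-dimensional body in $\mathbb{H}$; $\tau_k$ is nonnegative and strictly concave on $\mathrm{supp}\,\tau_k$; and $\tau_k$ is continuous on $\mathbb{H}$.
   Context: $s(t)=2\sin(t/2)$; $\mathbb{V}(h)=\{x\in\mathbb{R}^m:|\prod_{j=1}^m s(x_j)|\ge h\}$; $\mathbb{V}_0(h)=\mathbb{V}(h)\cap[0,2\pi]^m$; $\mathbb{V}_k(h)=\mathbb{V}_0(h)+2\pi k$ for $k\in\mathbb{Z}^m$. $\mathbb{Z}_0^m=\{0\}\times\mathbb{Z}^{m-1}$. $\mathcal{E}=(1,\dots,1)$, $\ell(x)=\{x+t\mathcal{E}:t\in\mathbb{R}\}$, and $\mathbb{H}=\{x\in\mathbb{R}^m:\sum_j x_j=0\}$. For $x\in\mathbb{H}$, $\tau_k(x)=\mathrm{mes}_1(\ell(x)\cap\mathbb{V}_k(h))$ (length of the intersection). $\mathrm{supp}\,\tau_k=\{x\in\mathbb{H}:\ell(x)\cap\mathbb{V}_k(h)\ne\emptyset\}$, the orthogonal projection of $\mathbb{V}_k(h)$ onto $\mathbb{H}$. *)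

From Stdlib Require Import Reals Lra Lia ZArith ClassicalEpsilon.
Open Scope R_scope.

(* Points of R^m are represented by functions nat -> R; only the coordinates
   j < m are meaningful.  [vec m x] says x is the canonical representative
   (coordinates j >= m are 0). *)
Definition vec (m : nat) (x : nat -> R) : Prop :=
  forall j : nat, (m <= j)%nat -> x j = 0.

Fixpoint sumR (m : nat) (f : nat -> R) : R :=
  match m with O => 0 | S n => sumR n f + f n end.

Fixpoint prodR (m : nat) (f : nat -> R) : R :=
  match m with O => 1 | S n => prodR n f * f n end.

Definition p7_dist (m : nat) (x y : nat -> R) : R :=
  sqrt (sumR m (fun j => (x j - y j) ^ 2)).

Definition s (t : R) : R := 2 * sin (t / 2).

Definition V (m : nat) (h : R) (x : nat -> R) : Prop :=
  Rabs (prodR m (fun j => s (x j))) >= h.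

Definition V0 (m : nat) (h : R) (x : nat -> R) : Prop :=
  V m h x /\ (forall j, (j < m)%nat -> 0 <= x j <= 2 * PI).

Definition Vk (m : nat) (h : R) (k : nat -> Z) (y : nat -> R) : Prop :=
  V0 m h (fun j => y j - 2 * PI * IZR (k j)).

Definition Hyp (m : nat) (x : nat -> R) : Prop :=
  vec m x /\ sumR m x = 0.

Definition shift (x : nat -> R) (t : R) : nat -> R := fun j => x j + t.

Definition cover_sum (A : R -> Prop) (l : R) : Prop :=
  exists a b : nat -> R,
    (forall n, a n <= b n) /\
    (forall t, A t -> exists n, a n <= t <= b n) /\
    Un_cv (fun N => sum_f_R0 (fun n => b n - a n) N) l.

Definition p7_is_glb (E : R -> Prop) (v : R) : Prop :=
  (forall l, E l -> v <= l) /\ (forall w, (forall l, E l -> w <= l) -> w <= v).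

Definition lebesgue1 (A : R -> Prop) : R :=
  epsilon (inhabits 0) (fun v => p7_is_glb (cover_sum A) v).

(* tau_k(x) = mes_1(l(x) /\ V_k(h)); the line l(x) is parametrised by
   t |-> x + tE, which has speed |E| = sqrt m, hence the factor sqrt m. *)
Definition tau (m : nat) (h : R) (k : nat -> Z) (x : nat -> R) : R :=
  sqrt (INR m) * lebesgue1 (fun t => Vk m h k (shift x t)).

Definition supp_tau (m : nat) (h : R) (k : nat -> Z) (x : nat -> R) : Prop :=
  Hyp m x /\ exists t : R, Vk m h k (shift x t).

Definition comb (l : R) (x y : nat -> R) : nat -> R :=
  fun j => l * x j + (1 - l) * y j.

Definition p7_rel_interior (m : nat) (S : (nat -> R) -> Prop) (x : nat -> R) : Prop :=
  S x /\ exists eps, eps > 0 /\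
    forall y, Hyp m y -> p7_dist m x y < eps -> S y.

Definition p7_convex (S : (nat -> R) -> Prop) : Prop :=
  forall x y l, S x -> S y -> 0 <= l <= 1 -> S (comb l x y).

Definition p7_strictly_convex (m : nat) (S : (nat -> R) -> Prop) : Prop :=
  p7_convex S /\
  forall x y l, S x -> S y -> x <> y -> 0 < l < 1 ->
    p7_rel_interior m S (comb l x y).

Definition p7_seq_converges (m : nat) (u : nat -> nat -> R) (x : nat -> R) : Prop :=
  forall eps, eps > 0 -> exists N, forall n, (n >= N)%nat -> p7_dist m (u n) x < eps.

Definition p7_compact (m : nat) (S : (nat -> R) -> Prop) : Prop :=
  forall u : nat -> nat -> R, (forall n, S (u n)) ->
    exists (phi : nat -> nat) (x : nat -> R),
      (forall n, (phi n < phi (Datatypes.S n))%nat) /\ S x /\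
      p7_seq_converges m (fun n => u (phi n)) x.

(* (m-1)-dimensional body in H: subset of H with nonempty interior
   relative to H *)
Definition p7_full_dim_in_H (m : nat) (S : (nat -> R) -> Prop) : Prop :=
  (forall x, S x -> Hyp m x) /\ exists x, p7_rel_interior m S x.

Definition p7_strictly_concave_on (m : nat) (S : (nat -> R) -> Prop)
  (f : (nat -> R) -> R) : Prop :=
  forall x y l, S x -> S y -> x <> y -> 0 < l < 1 ->
    f (comb l x y) > l * f x + (1 - l) * f y.

Definition p7_continuous_on_H (m : nat) (f : (nat -> R) -> R) : Prop :=
  forall x, Hyp m x -> forall eps, eps > 0 -> exists delta, delta > 0 /\
    forall y, Hyp m y -> p7_dist m x y < delta -> Rabs (f y - f x) < eps.

From Stdlib Require Import Reals Arith Lra Lia List.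
From Stdlib Require Import Classical ClassicalEpsilon FunctionalExtensionality PropExtensionality.
Open Scope R_scope.

(* Let [Q(w) = prod_j q(w_j)], where [q = s] on [[0, 2 pi]] and [q = 0] outside, so
   that [V_k(h) = {w : Q(w - 2 pi k) >= h}].  Where [Q > 0], [ln Q] is a sum of the
   strictly concave functions [ln s(w_j)], so [Q] is strictly quasi-concave there.
   Hence each section [l(x) ∩ V_k(h)] is a segment [[a(x), b(x)]], and
   [tau(x) = sqrt m (b(x) - a(x))].  A convex combination of points of the sections
   over [x] and [y] lies in the section over the combined point, strictly inside it
   when [x <> y] (the two lines are then disjoint): this gives strict convexity of
   the support and strict concavity of [tau].  As [Q] is Lipschitz, the segments
   move continuously with [x], so [tau] is continuous; the support is compact, being
   the projection of the bounded closed set [V_k(h)]. *)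

Lemma sumR_ext n f g : (forall j, (j < n)%nat -> f j = g j) -> sumR n f = sumR n g.
Proof.
  induction n as [|n IH]; intros H; simpl; [reflexivity|].
  rewrite IH by (intros; apply H; lia). rewrite H by lia. reflexivity.
Qed.

Lemma prodR_ext n f g : (forall j, (j < n)%nat -> f j = g j) -> prodR n f = prodR n g.
Proof.
  induction n as [|n IH]; intros H; simpl; [reflexivity|].
  rewrite IH by (intros; apply H; lia). rewrite H by lia. reflexivity.
Qed.

Lemma sumR_le n f g : (forall j, (j < n)%nat -> f j <= g j) -> sumR n f <= sumR n g.
Proof.
  induction n as [|n IH]; intros H; simpl; [lra|].
  assert (f n <= g n) by (apply H; lia).
  assert (sumR n f <= sumR n g) by (apply IH; intros; apply H; lia). lra.
Qed.

Lemma sumR_lt n f g : (forall j, (j < n)%nat -> f j <= g j) ->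
  (exists j, (j < n)%nat /\ f j < g j) -> sumR n f < sumR n g.
Proof.
  induction n as [|n IH]; intros H [j [Hj Hlt]]; [lia|]. simpl.
  destruct (Nat.eq_dec j n) as [->|Hne].
  - assert (sumR n f <= sumR n g) by (apply sumR_le; intros; apply H; lia). lra.
  - assert (f n <= g n) by (apply H; lia).
    assert (sumR n f < sumR n g) by (apply IH; [intros; apply H; lia | exists j; split; [lia | exact Hlt]]).
    lra.
Qed.

Lemma sumR_lin n f g a b : sumR n (fun j => a * f j + b * g j) = a * sumR n f + b * sumR n g.
Proof. induction n as [|n IH]; simpl; [ring | rewrite IH; ring]. Qed.

Lemma sumR_const n c : sumR n (fun _ => c) = INR n * c.
Proof. induction n as [|n IH]; simpl sumR; [simpl; ring | rewrite IH, S_INR; ring]. Qed.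

Lemma sumR_nonneg n f : (forall j, (j < n)%nat -> 0 <= f j) -> 0 <= sumR n f.
Proof.
  intros H. rewrite <- (Rmult_0_r (INR n)), <- sumR_const. apply sumR_le; exact H.
Qed.

Lemma sumR_term_le n f j : (forall i, (i < n)%nat -> 0 <= f i) -> (j < n)%nat -> f j <= sumR n f.
Proof.
  induction n as [|n IH]; intros H Hj; [lia|]. simpl.
  assert (0 <= sumR n f) by (apply sumR_nonneg; intros; apply H; lia).
  destruct (Nat.eq_dec j n) as [->|]; [lra|].
  assert (f j <= sumR n f) by (apply IH; [intros; apply H; lia | lia]).
  assert (0 <= f n) by (apply H; lia). lra.
Qed.

Lemma prodR_const n c : prodR n (fun _ => c) = c ^ n.
Proof. induction n as [|n IH]; simpl; [reflexivity | rewrite IH; ring]. Qed.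

Lemma dist_coord_le m x y j : (j < m)%nat -> Rabs (x j - y j) <= p7_dist m x y.
Proof.
  intros Hj. unfold p7_dist. rewrite <- sqrt_Rsqr_abs. apply sqrt_le_1_alt.
  rewrite Rsqr_pow2. apply (sumR_term_le m (fun j => (x j - y j) ^ 2)); [intros; apply pow2_ge_0 | exact Hj].
Qed.

Lemma dist_le_sum_abs m x y : p7_dist m x y <= sumR m (fun j => Rabs (x j - y j)).
Proof.
  unfold p7_dist.
  assert (Hs : forall n, 0 <= sumR n (fun j => Rabs (x j - y j)))
    by (intro n; apply sumR_nonneg; intros; apply Rabs_pos).
  rewrite <- (sqrt_pow2 _ (Hs m)). apply sqrt_le_1_alt.
  induction m as [|m IH]; simpl; [lra|].
  assert (E : (x m - y m) ^ 2 = Rabs (x m - y m) ^ 2) by (rewrite <- !Rsqr_pow2; apply Rsqr_abs).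
  specialize (Hs m). assert (0 <= Rabs (x m - y m)) by apply Rabs_pos.
  simpl in IH, E. nra.
Qed.

(** * Lebesgue measure of an interval *)

Fixpoint total_length {I : Type} (a b : I -> R) (L : list I) : R :=
  match L with nil => 0 | i :: L' => (b i - a i) + total_length a b L' end.

Lemma total_length_app {I : Type} (a b : I -> R) L1 L2 :
  total_length a b (L1 ++ L2) = total_length a b L1 + total_length a b L2.
Proof. induction L1 as [|i L1 IH]; simpl; [lra | rewrite IH; lra]. Qed.

Lemma total_length_nonneg {I : Type} (a b : I -> R) L :
  (forall i, a i <= b i) -> 0 <= total_length a b L.
Proof. intros H; induction L as [|i L IH]; simpl; [lra | specialize (H i); lra]. Qed.

Lemma total_length_seq (a b : nat -> R) N :
  total_length a b (seq 0 (S N)) = sum_f_R0 (fun n => b n - a n) N.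
Proof.
  induction N as [|N IH]; [simpl; lra|].
  rewrite seq_S, total_length_app, IH. simpl. lra.
Qed.

(* Induction on the number of intervals: drop an interval containing [d]; the
   others cover [[c, a i]]. *)
Lemma length_le_total_length {I : Type} (a b : I -> R) (Hab : forall i, a i <= b i) L c d :
  c <= d -> (forall t, c <= t <= d -> exists i, In i L /\ a i < t < b i) ->
  d - c <= total_length a b L.
Proof.
  remember (length L) as n eqn:Hn. revert L c d Hn.
  induction n as [n IH] using lt_wf_ind. intros L c d Hn Hcd Hcov.
  destruct (Hcov d) as [i [Hi Hid]]; [lra|].
  destruct (in_split _ _ Hi) as [L1 [L2 ->]].
  rewrite total_length_app; simpl.
  assert (H1 := total_length_nonneg a b L1 Hab). assert (H2 := total_length_nonneg a b L2 Hab).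
  destruct (Rlt_or_le (a i) c) as [Hlt | Hle]; [lra|].
  assert (Hrest : a i - c <= total_length a b (L1 ++ L2)).
  { apply (IH (length (L1 ++ L2))); [rewrite Hn, !length_app; simpl; lia | reflexivity | lra |].
    intros t Ht. destruct (Hcov t) as [j [Hj Hjt]]; [lra|].
    exists j; split; [|exact Hjt].
    apply in_app_or in Hj; apply in_or_app. destruct Hj as [Hj | [<- | Hj]]; auto; lra. }
  rewrite total_length_app in Hrest. lra.
Qed.

Lemma INR_list_bound (l : list R) : exists N, forall n, In (INR n) l -> (n <= N)%nat.
Proof.
  induction l as [|r l [N HN]]; [exists O; intros n [] |].
  destruct (classic (exists n0, r = INR n0)) as [[n0 ->] | Hr].
  - exists (Nat.max n0 N). intros n [E | Hin]; [apply INR_eq in E; lia | specialize (HN n Hin); lia].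
  - exists N. intros n [E | Hin]; [exfalso; eauto | auto].
Qed.

(* Heine-Borel ([compact_P3]); Stdlib families are indexed by reals, hence [INR n]. *)
Lemma open_cover_finite (a b : nat -> R) c d :
  (forall t, c <= t <= d -> exists n, a n < t < b n) ->
  exists N, forall t, c <= t <= d -> exists n, (n <= N)%nat /\ a n < t < b n.
Proof.
  intros Hcov.
  set (fam := mkfamily (fun r => exists n : nat, r = INR n)
                (fun r t => exists n : nat, r = INR n /\ a n < t < b n)
                (fun r H => match H with ex_intro _ _ (ex_intro _ n (conj e _)) => ex_intro _ n e end)).
  destruct (compact_P3 c d fam) as [D [HDcov [lst Hlst]]].
  - split.
    + intros t Ht. destruct (Hcov t Ht) as [n Hn]. exists (INR n), n; auto.
    + intros r t [n [Hr Ht]].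
      assert (Hd : 0 < Rmin (t - a n) (b n - t)) by (apply Rmin_pos; lra).
      exists (mkposreal _ Hd); intros z Hz; unfold disc in Hz; simpl in Hz.
      exists n; split; [exact Hr|].
      assert (H1 := Rmin_l (t - a n) (b n - t)); assert (H2 := Rmin_r (t - a n) (b n - t)).
      apply Rabs_def2 in Hz; lra.
  - destruct (INR_list_bound lst) as [N HN]. exists N.
    intros t Ht. destruct (HDcov t Ht) as [r [[n [-> Hn]] HDr]].
    exists n; split; [|exact Hn]. apply HN, Hlst. split; [exists n |]; auto.
Qed.

Lemma sum_half_powers_le N : sum_f_R0 (pow (/ 2)) N <= 2.
Proof.
  enough (E : sum_f_R0 (pow (/ 2)) N = 2 - (/ 2) ^ N)
    by (assert (0 < (/ 2) ^ N) by (apply pow_lt; lra); lra).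
  induction N as [|N IH]; simpl; [lra | rewrite IH; lra].
Qed.

(* Enlarging the [n]-th interval by [eps / 8 * 2^-n] makes the cover open at a
   total cost [<= eps / 2]. *)
Lemma cover_sum_ge_length (A : R -> Prop) c d : c <= d -> (forall t, c <= t <= d -> A t) ->
  forall l, cover_sum A l -> d - c <= l.
Proof.
  intros Hcd HA l [a [b [Hab [Hcov Hcv]]]].
  destruct (Rle_or_lt (d - c) l) as [|Hlt]; [assumption | exfalso].
  set (eps := d - c - l).
  assert (Heps : 0 < eps) by (unfold eps; lra).
  assert (Hpow : forall n, 0 < (/ 2) ^ n) by (intro; apply pow_lt; lra).
  set (a' := fun n => a n - eps / 8 * (/ 2) ^ n).
  set (b' := fun n => b n + eps / 8 * (/ 2) ^ n).
  assert (Hab' : forall n, a' n <= b' n) by (intro n; specialize (Hab n); specialize (Hpow n); unfold a', b'; nra).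
  destruct (open_cover_finite a' b' c d) as [N HN].
  { intros t Ht. destruct (Hcov t (HA t Ht)) as [n Hn].
    exists n. specialize (Hpow n). unfold a', b'. nra. }
  assert (Hlen : d - c <= total_length a' b' (seq 0 (S N))).
  { apply length_le_total_length; [exact Hab' | exact Hcd |].
    intros t Ht. destruct (HN t Ht) as [n [Hn Hnt]].
    exists n; split; [apply in_seq; lia | exact Hnt]. }
  rewrite total_length_seq in Hlen.
  rewrite (sum_eq _ (fun n => (b n - a n) + (/ 2) ^ n * (eps / 4))) in Hlen
    by (intros; unfold a', b'; lra).
  rewrite plus_sum, <- scal_sum in Hlen.
  assert (Hl : sum_f_R0 (fun n => b n - a n) N <= l)
    by (apply (sum_incr _ _ _ Hcv); intro n; specialize (Hab n); lra).
  assert (eps / 4 * sum_f_R0 (pow (/ 2)) N <= eps / 4 * 2)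
    by (apply Rmult_le_compat_l; [lra | apply sum_half_powers_le]).
  unfold eps in *. lra.
Qed.

Lemma lebesgue1_glb A v : p7_is_glb (cover_sum A) v -> lebesgue1 A = v.
Proof.
  intros [Hlow Hgreat]. unfold lebesgue1.
  destruct (epsilon_spec (inhabits 0) (fun v => p7_is_glb (cover_sum A) v)) as [Hlow' Hgreat'];
    [exists v; split; assumption |].
  apply Rle_antisym; [apply Hgreat; exact Hlow' | apply Hgreat'; exact Hlow].
Qed.

Lemma sum_f_R0_first (f : nat -> R) N : (forall n, (0 < n)%nat -> f n = 0) -> sum_f_R0 f N = f O.
Proof. intros H; induction N as [|N IH]; simpl; [reflexivity | rewrite IH, (H (S N)) by lia; ring]. Qed.

Lemma cover_sum_interval (A : R -> Prop) c d : c <= d -> (forall t, A t -> c <= t <= d) ->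
  cover_sum A (d - c).
Proof.
  intros Hcd HA.
  exists (fun n => match n with O => c | S _ => 0 end), (fun n => match n with O => d | S _ => 0 end).
  split; [intros [|n]; lra |]. split; [intros t Ht; exists O; apply HA, Ht |].
  intros eps Heps; exists O; intros n _. unfold Rdist.
  rewrite sum_f_R0_first by (intros [|k] Hk; [lia | simpl; ring]).
  rewrite Rminus_diag, Rabs_R0; lra.
Qed.

Lemma lebesgue1_interval (A : R -> Prop) c d : c <= d -> (forall t, A t <-> c <= t <= d) ->
  lebesgue1 A = d - c.
Proof.
  intros Hcd HA. apply lebesgue1_glb. split.
  - apply cover_sum_ge_length; [exact Hcd | intros; apply HA; assumption].
  - intros w Hw. apply Hw, cover_sum_interval; [exact Hcd | intros; apply HA; assumption].
Qed.

Lemma lebesgue1_empty (A : R -> Prop) : (forall t, ~ A t) -> lebesgue1 A = 0.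
Proof.
  intros HA. apply lebesgue1_glb. split.
  - intros l [a [b [Hab [_ Hcv]]]].
    assert (H := sum_incr _ O _ Hcv (fun n => ltac:(specialize (Hab n); lra))).
    simpl in H. specialize (Hab O). lra.
  - intros w Hw. rewrite <- (Rminus_diag 0).
    apply Hw, cover_sum_interval; [lra | intros t Ht; exfalso; exact (HA t Ht)].
Qed.

(* [s] cut off outside [[0, 2 pi]], so that for [h > 0] the set [V_0(h)] is
   exactly the superlevel set [{prod_s_trunc >= h}]. *)
Definition s_trunc (u : R) : R :=
  if Rle_dec 0 u then if Rle_dec u (2 * PI) then s u else 0 else 0.

Definition prod_s_trunc (m : nat) (w : nat -> R) : R := prodR m (fun j => s_trunc (w j)).

Lemma range_cases u : 0 <= u <= 2 * PI \/ u < 0 \/ 2 * PI < u.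
Proof. destruct (Rle_lt_dec 0 u), (Rle_lt_dec u (2 * PI)); auto. Qed.

Lemma s_trunc_in u : 0 <= u <= 2 * PI -> s_trunc u = s u.
Proof. intros Hu; unfold s_trunc; destruct (Rle_dec 0 u), (Rle_dec u (2 * PI)); lra. Qed.

Lemma s_trunc_out u : u < 0 \/ 2 * PI < u -> s_trunc u = 0.
Proof. intros Hu; unfold s_trunc; destruct (Rle_dec 0 u), (Rle_dec u (2 * PI)); lra. Qed.

Lemma s_nonneg u : 0 <= u <= 2 * PI -> 0 <= s u.
Proof. intros Hu; unfold s. assert (0 <= sin (u / 2)) by (apply sin_ge_0; lra). lra. Qed.

Lemma s_pos u : 0 < u < 2 * PI -> 0 < s u.
Proof. intros Hu; unfold s. assert (0 < sin (u / 2)) by (apply sin_gt_0; lra). lra. Qed.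

Lemma s_trunc_bounds u : 0 <= s_trunc u <= 2.
Proof.
  destruct (range_cases u) as [Hu | Hu]; [| rewrite s_trunc_out by exact Hu; lra].
  rewrite s_trunc_in by exact Hu. assert (H := s_nonneg u Hu).
  unfold s in *. assert (H2 := SIN_bound (u / 2)). lra.
Qed.

Lemma s_trunc_pos u : 0 < s_trunc u -> 0 < u < 2 * PI.
Proof.
  intros H. destruct (range_cases u) as [Hu | Hu]; [| rewrite s_trunc_out in H; lra].
  rewrite s_trunc_in in H by exact Hu. unfold s in H.
  destruct (Req_dec u 0) as [-> | H0]; [rewrite Rdiv_0_l, sin_0 in H; lra |].
  destruct (Req_dec u (2 * PI)) as [-> | H2]; [| lra].
  replace (2 * PI / 2) with PI in H by field. rewrite sin_PI in H. lra.
Qed.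

Lemma sin_lipschitz a b : Rabs (sin a - sin b) <= Rabs (a - b).
Proof.
  assert (Hlt : forall x y, x < y -> Rabs (sin x - sin y) <= Rabs (x - y)).
  { intros x y Hxy.
    destruct (MVT_cor2 sin cos x y Hxy) as [c [Hc _]]; [intros; apply derivable_pt_lim_sin |].
    rewrite Rabs_minus_sym, Hc, Rabs_mult, (Rabs_minus_sym x).
    assert (Rabs (cos c) <= 1) by (apply Rabs_le, COS_bound).
    assert (0 <= Rabs (y - x)) by apply Rabs_pos. nra. }
  destruct (Rtotal_order a b) as [H | [-> | H]].
  - auto.
  - rewrite !Rminus_diag, Rabs_R0; lra.
  - rewrite Rabs_minus_sym, (Rabs_minus_sym a). auto.
Qed.

Lemma sin_le_id x : 0 <= x -> sin x <= x.
Proof. intros H. destruct (Req_dec x 0) as [-> | ]; [rewrite sin_0; lra | left; apply sin_lt_x; lra]. Qed.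

Lemma s_trunc_le_dist_out u v : 0 <= u <= 2 * PI -> v < 0 \/ 2 * PI < v -> s_trunc u <= Rabs (u - v).
Proof.
  intros Hu [Hv | Hv]; rewrite s_trunc_in by exact Hu; unfold s.
  - assert (sin (u / 2) <= u / 2) by (apply sin_le_id; lra).
    rewrite Rabs_right by lra. lra.
  - rewrite <- sin_PI_x. assert (sin (PI - u / 2) <= PI - u / 2) by (apply sin_le_id; lra).
    rewrite Rabs_left by lra. lra.
Qed.

Lemma s_trunc_lipschitz u v : Rabs (s_trunc u - s_trunc v) <= Rabs (u - v).
Proof.
  destruct (range_cases u) as [Hu | Hu], (range_cases v) as [Hv | Hv].
  - rewrite !s_trunc_in by assumption. unfold s.
    rewrite <- Rmult_minus_distr_l, Rabs_mult, Rabs_right by lra.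
    assert (H := sin_lipschitz (u / 2) (v / 2)).
    replace (u / 2 - v / 2) with ((u - v) * / 2) in H by field.
    rewrite Rabs_mult, (Rabs_right (/ 2)) in H by lra. lra.
  - rewrite (s_trunc_out v), Rminus_0_r, Rabs_right by (assumption || apply Rle_ge, s_trunc_bounds).
    apply s_trunc_le_dist_out; assumption.
  - rewrite (s_trunc_out u), Rminus_0_l, Rabs_Ropp, Rabs_right, Rabs_minus_sym
      by (assumption || apply Rle_ge, s_trunc_bounds).
    apply s_trunc_le_dist_out; assumption.
  - rewrite !s_trunc_out, Rminus_diag, Rabs_R0 by assumption. apply Rabs_pos.
Qed.

Lemma prod_s_trunc_bounds n w : 0 <= prod_s_trunc n w <= 2 ^ n.
Proof.
  unfold prod_s_trunc; induction n as [|n IH]; simpl; [lra |].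
  assert (H := s_trunc_bounds (w n)). split; [apply Rmult_le_pos; lra |].
  rewrite (Rmult_comm 2). apply Rmult_le_compat; lra.
Qed.

Lemma prod_s_trunc_lipschitz n w w' :
  Rabs (prod_s_trunc n w - prod_s_trunc n w') <= 2 ^ n * sumR n (fun j => Rabs (w j - w' j)).
Proof.
  induction n as [|n IH]; unfold prod_s_trunc in *; simpl.
  - rewrite Rminus_diag, Rabs_R0; lra.
  - set (P := prodR n (fun j => s_trunc (w j))) in *.
    set (P' := prodR n (fun j => s_trunc (w' j))) in *.
    replace (P * s_trunc (w n) - P' * s_trunc (w' n))
      with (P * (s_trunc (w n) - s_trunc (w' n)) + (P - P') * s_trunc (w' n)) by ring.
    assert (HP := prod_s_trunc_bounds n w). unfold prod_s_trunc in HP; fold P in HP.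
    assert (Hq := s_trunc_lipschitz (w n) (w' n)). assert (Hb := s_trunc_bounds (w' n)).
    assert (Hs : 0 <= sumR n (fun j => Rabs (w j - w' j))) by (apply sumR_nonneg; intros; apply Rabs_pos).
    eapply Rle_trans; [apply Rabs_triang |]. rewrite !Rabs_mult, (Rabs_right P), (Rabs_right (s_trunc _)) by lra.
    assert (P * Rabs (s_trunc (w n) - s_trunc (w' n)) <= 2 ^ n * Rabs (w n - w' n))
      by (apply Rmult_le_compat; try apply Rabs_pos; lra).
    assert (Rabs (P - P') * s_trunc (w' n) <= 2 ^ n * sumR n (fun j => Rabs (w j - w' j)) * 2)
      by (apply Rmult_le_compat; try apply Rabs_pos; lra).
    assert (0 <= 2 ^ n * Rabs (w n - w' n)) by (apply Rmult_le_pos; [apply pow_le; lra | apply Rabs_pos]).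
    lra.
Qed.

Lemma prod_s_trunc_pos_coord n w : 0 < prod_s_trunc n w -> forall j, (j < n)%nat -> 0 < w j < 2 * PI.
Proof.
  unfold prod_s_trunc; induction n as [|n IH]; intros H j Hj; [lia |]. simpl in H.
  assert (H0 := prod_s_trunc_bounds n w). unfold prod_s_trunc in H0.
  assert (H1 := s_trunc_bounds (w n)).
  destruct (Nat.eq_dec j n) as [-> | Hne].
  - apply s_trunc_pos. destruct (proj1 H1) as [| E]; [assumption | rewrite <- E in H; lra].
  - apply IH; [destruct (proj1 H0) as [| E]; [assumption | rewrite <- E in H; lra] | lia].
Qed.

Lemma V0_iff m h w : 0 < h -> V0 m h w <-> h <= prod_s_trunc m w.
Proof.
  intros Hh.
  assert (E : (forall j, (j < m)%nat -> 0 <= w j <= 2 * PI) ->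
              Rabs (prodR m (fun j => s (w j))) = prod_s_trunc m w).
  { intros Hd. replace (prodR m (fun j => s (w j))) with (prod_s_trunc m w).
    - apply Rabs_right, Rle_ge, prod_s_trunc_bounds.
    - apply prodR_ext. intros j Hj. apply s_trunc_in, Hd, Hj. }
  split.
  - intros [HV Hd]. unfold V in HV. rewrite E in HV by exact Hd. lra.
  - intros HQ. assert (Hd : forall j, (j < m)%nat -> 0 <= w j <= 2 * PI)
      by (intros j Hj; assert (H := prod_s_trunc_pos_coord m w ltac:(lra) j Hj); lra).
    split; [unfold V; rewrite E by exact Hd; lra | exact Hd].
Qed.

(** * Log-concavity *)

Definition log_s (u : R) : R := ln (s u).

Lemma log_s_derivative u : 0 < u < 2 * PI -> derivable_pt_lim log_s u (cos (u / 2) / s u).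
Proof.
  intros Hu. assert (Hs := s_pos u Hu).
  assert (Hhalf : derivable_pt_lim (fun y => id y / 2) u (1 / 2))
    by apply derivable_pt_lim_div_scal, derivable_pt_lim_id.
  assert (Hsin := derivable_pt_lim_comp _ sin u _ _ Hhalf (derivable_pt_lim_sin (u / 2))).
  assert (H2sin := derivable_pt_lim_scal _ 2 u _ Hsin).
  assert (Hln := derivable_pt_lim_comp _ ln u _ _ H2sin (derivable_pt_lim_ln _ Hs)).
  replace (cos (u / 2) / s u) with (/ s u * (2 * (cos (u / 2) * (1 / 2)))) by (field; lra).
  exact Hln.
Qed.

Lemma log_s_derivative_decreasing u v : 0 < u -> u < v -> v < 2 * PI ->
  cos (v / 2) / s v < cos (u / 2) / s u.
Proof.
  intros H1 H2 H3. unfold s.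
  assert (Hu : 0 < sin (u / 2)) by (apply sin_gt_0; lra).
  assert (Hv : 0 < sin (v / 2)) by (apply sin_gt_0; lra).
  assert (Hd : 0 < sin (v / 2 - u / 2)) by (apply sin_gt_0; lra).
  rewrite sin_minus in Hd.
  apply (Rmult_lt_reg_r (2 * sin (u / 2) * (2 * sin (v / 2)))); [nra |].
  unfold Rdiv. field_simplify; [nra | lra | lra].
Qed.

(* Mean value theorem on [[u, c]] and [[c, v]]: the two slopes are [f'] at
   points [x1 < x2], and [f' x2 < f' x1]. *)
Lemma strictly_concave_of_derivative_decreasing (f f' : R -> R) a b :
  (forall u, a < u < b -> derivable_pt_lim f u (f' u)) ->
  (forall u v, a < u -> u < v -> v < b -> f' v < f' u) ->
  forall u v l, a < u -> u < v -> v < b -> 0 < l < 1 ->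
  l * f u + (1 - l) * f v < f (l * u + (1 - l) * v).
Proof.
  intros Hd Hdec u v l H1 H2 H3 Hl.
  set (c := l * u + (1 - l) * v).
  assert (Hc1 : u < c) by (unfold c; nra). assert (Hc2 : c < v) by (unfold c; nra).
  destruct (MVT_cor2 f f' u c Hc1) as [x1 [E1 Hx1]]; [intros; apply Hd; lra |].
  destruct (MVT_cor2 f f' c v Hc2) as [x2 [E2 Hx2]]; [intros; apply Hd; lra |].
  assert (Hlt : f' x2 < f' x1) by (apply Hdec; lra).
  assert (K : l * (f c - f u) - (1 - l) * (f v - f c) = l * (1 - l) * (v - u) * (f' x1 - f' x2)).
  { rewrite E1, E2. unfold c. ring. }
  assert (0 < l * (1 - l) * (v - u) * (f' x1 - f' x2))
    by (repeat apply Rmult_lt_0_compat; lra).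
  lra.
Qed.

Lemma log_s_strictly_concave u v l : 0 < u < 2 * PI -> 0 < v < 2 * PI -> u <> v -> 0 < l < 1 ->
  l * log_s u + (1 - l) * log_s v < log_s (l * u + (1 - l) * v).
Proof.
  intros Hu Hv Huv Hl.
  assert (Hconc := strictly_concave_of_derivative_decreasing log_s (fun u => cos (u / 2) / s u) 0 (2 * PI)
    log_s_derivative (fun u v H1 H2 H3 => log_s_derivative_decreasing u v H1 H2 H3)).
  destruct (Rlt_or_le u v) as [H | H].
  - apply Hconc; lra.
  - replace (l * u + (1 - l) * v) with ((1 - l) * v + (1 - (1 - l)) * u) by ring.
    replace (l * log_s u + (1 - l) * log_s v) with ((1 - l) * log_s v + (1 - (1 - l)) * log_s u) by ring.
    apply Hconc; lra.
Qed.

Lemma log_s_concave u v l : 0 < u < 2 * PI -> 0 < v < 2 * PI -> 0 <= l <= 1 ->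
  l * log_s u + (1 - l) * log_s v <= log_s (l * u + (1 - l) * v).
Proof.
  intros Hu Hv Hl.
  destruct (Req_dec u v) as [<- | Huv];
    [replace (l * u + (1 - l) * u) with u by ring; right; ring |].
  destruct (Req_dec l 0) as [-> | Hl0];
    [replace (0 * u + (1 - 0) * v) with v by ring; right; ring |].
  destruct (Req_dec l 1) as [-> | Hl1];
    [replace (1 * u + (1 - 1) * v) with u by ring; right; ring |].
  left; apply log_s_strictly_concave; lra.
Qed.

Lemma prod_s_trunc_exp n w : (forall j, (j < n)%nat -> 0 < w j < 2 * PI) ->
  prod_s_trunc n w = exp (sumR n (fun j => log_s (w j))).
Proof.
  unfold prod_s_trunc; induction n as [|n IH]; intros H; simpl; [rewrite exp_0; reflexivity |].
  rewrite exp_plus, IH by (intros; apply H; lia). f_equal.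
  assert (Hn := H n ltac:(lia)). unfold log_s. rewrite exp_ln by (apply s_pos; lra).
  apply s_trunc_in; lra.
Qed.

Lemma exp_le_compat x y : x <= y -> exp x <= exp y.
Proof. intros [H | ->]; [left; apply exp_increasing, H | right; reflexivity]. Qed.

Lemma convex_comb_pos a b l : 0 < a -> 0 < b -> 0 <= l <= 1 -> 0 < l * a + (1 - l) * b.
Proof.
  intros Ha Hb [[Hl | <-] Hl1]; [| lra].
  assert (0 < l * a) by (apply Rmult_lt_0_compat; lra).
  assert (0 <= (1 - l) * b) by (apply Rmult_le_pos; lra). lra.
Qed.

Section LogConcaveProduct.

Variables (n : nat) (c : R) (w w' : nat -> R).
Hypotheses (Hc : 0 < c) (Hw : c <= prod_s_trunc n w) (Hw' : c <= prod_s_trunc n w').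

Lemma comb_superlevel_log_bound l : 0 <= l <= 1 ->
  (forall j, (j < n)%nat -> 0 < comb l w w' j < 2 * PI) /\
  c <= exp (l * sumR n (fun j => log_s (w j)) + (1 - l) * sumR n (fun j => log_s (w' j))).
Proof.
  intros Hl.
  assert (D := prod_s_trunc_pos_coord n w ltac:(lra)).
  assert (D' := prod_s_trunc_pos_coord n w' ltac:(lra)).
  split.
  - intros j Hj. specialize (D j Hj); specialize (D' j Hj). unfold comb. split.
    + apply convex_comb_pos; lra.
    + assert (H := convex_comb_pos (2 * PI - w j) (2 * PI - w' j) l ltac:(lra) ltac:(lra) Hl). lra.
  - rewrite prod_s_trunc_exp in Hw, Hw' by assumption.
    set (S := sumR n (fun j => log_s (w j))) in *. set (S' := sumR n (fun j => log_s (w' j))) in *.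
    destruct (Rle_or_lt S S') as [H | H].
    + eapply Rle_trans; [exact Hw | apply exp_le_compat; nra].
    + eapply Rle_trans; [exact Hw' | apply exp_le_compat; nra].
Qed.

Lemma prod_s_trunc_comb_ge l : 0 <= l <= 1 -> c <= prod_s_trunc n (comb l w w').
Proof.
  intros Hl. destruct (comb_superlevel_log_bound l Hl) as [D Hbound].
  rewrite prod_s_trunc_exp by exact D.
  eapply Rle_trans; [exact Hbound | apply exp_le_compat].
  rewrite <- sumR_lin. apply sumR_le. intros j Hj. unfold comb.
  apply log_s_concave; [apply (prod_s_trunc_pos_coord n w) | apply (prod_s_trunc_pos_coord n w') | ]; auto; lra.
Qed.

Lemma prod_s_trunc_comb_gt l : 0 < l < 1 -> (exists j, (j < n)%nat /\ w j <> w' j) ->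
  c < prod_s_trunc n (comb l w w').
Proof.
  intros Hl Hne. destruct (comb_superlevel_log_bound l ltac:(lra)) as [D Hbound].
  assert (Dw := prod_s_trunc_pos_coord n w ltac:(lra)).
  assert (Dw' := prod_s_trunc_pos_coord n w' ltac:(lra)).
  rewrite prod_s_trunc_exp by exact D.
  eapply Rle_lt_trans; [exact Hbound | apply exp_increasing].
  rewrite <- sumR_lin. apply sumR_lt.
  - intros j Hj. unfold comb. apply log_s_concave; auto; lra.
  - destruct Hne as [j [Hj Hne]]. exists j; split; [exact Hj |]. unfold comb.
    apply log_s_strictly_concave; auto.
Qed.

End LogConcaveProduct.

Definition lipschitz (L : R) (f : R -> R) : Prop :=
  forall t t', Rabs (f t - f t') <= L * Rabs (t - t').

Lemma mul_lt_of_le_div L d e : 0 <= L -> 0 < e -> d <= e / (L + 1) -> L * d < e.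
Proof.
  intros HL He Hde.
  assert (L * d <= L * (e / (L + 1))) by (apply Rmult_le_compat_l; lra).
  assert (0 < e / (L + 1)) by (apply Rdiv_lt_0_compat; lra).
  replace (L * (e / (L + 1))) with (e - e / (L + 1)) in * by (field; lra). lra.
Qed.

Lemma lipschitz_continuity_pt L f t : 0 <= L -> lipschitz L f -> continuity_pt f t.
Proof.
  intros HL Hf e He. exists (e / (L + 1)). split; [apply Rdiv_lt_0_compat; lra |].
  intros t' [_ Ht']. simpl in *. unfold R_dist in *.
  eapply Rle_lt_trans; [apply Hf | apply mul_lt_of_le_div; lra].
Qed.

Lemma lipschitz_superlevel_closed L f h : 0 <= L -> lipschitz L f -> closed_set (fun t => h <= f t).
Proof.
  intros HL Hf t Ht. unfold complementary in Ht.
  assert (Hd : 0 < (h - f t) / (L + 1)) by (apply Rdiv_lt_0_compat; lra).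
  exists (mkposreal _ Hd). intros y Hy. unfold disc in Hy; simpl in Hy. unfold complementary.
  assert (H := Hf y t). assert (Hr := Rle_abs (f y - f t)).
  assert (L * Rabs (y - t) < h - f t) by (apply mul_lt_of_le_div; lra).
  lra.
Qed.

Lemma lub_in_closed A b : closed_set A -> is_lub A b -> A b.
Proof.
  intros Hcl [Hub Hleast]. apply NNPP; intro Hb. destruct (Hcl b Hb) as [[d Hd] Hdisc].
  assert (Hup : is_upper_bound A (b - d / 2)).
  { intros t Ht. destruct (Rle_or_lt t (b - d / 2)); [assumption | exfalso].
    assert (t <= b) by (apply Hub, Ht).
    apply (Hdisc t); [unfold disc; simpl; apply Rabs_def1; lra | exact Ht]. }
  specialize (Hleast _ Hup). lra.
Qed.

Lemma closed_set_opp A : closed_set A -> closed_set (fun t => A (- t)).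
Proof.
  intros Hcl t Ht. destruct (Hcl (- t) Ht) as [d Hd]. exists d.
  intros y Hy. apply Hd. unfold disc in *.
  replace (- y - - t) with (- (y - t)) by ring. rewrite Rabs_Ropp. exact Hy.
Qed.

Lemma closed_convex_bounded_interval A p r : closed_set A ->
  (forall a b t, A a -> A b -> a <= t <= b -> A t) ->
  (forall t, A t -> p <= t <= r) -> (exists t, A t) ->
  exists a b, a <= b /\ forall t, A t <-> a <= t <= b.
Proof.
  intros Hcl Hconv Hbd [t0 Ht0].
  destruct (completeness A) as [b Hb];
    [exists r; intros t Ht; apply Hbd, Ht | exists t0; exact Ht0 |].
  destruct (completeness (fun t => A (- t))) as [na Hna].
  { exists (- p). intros t Ht. specialize (Hbd _ Ht). lra. }
  { exists (- t0). rewrite Ropp_involutive. exact Ht0. }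
  assert (Ab : A b) by (apply lub_in_closed; assumption).
  assert (Aa : A (- na)) by (apply (lub_in_closed (fun t => A (- t))); [apply closed_set_opp |]; assumption).
  exists (- na), b. split; [apply (proj1 Hb), Aa |].
  intros t; split.
  - intros Ht. split; [| apply (proj1 Hb), Ht].
    assert (- t <= na) by (apply (proj1 Hna); rewrite Ropp_involutive; exact Ht). lra.
  - intros Ht. apply (Hconv (- na) b); assumption.
Qed.

Lemma lipschitz_superlevel_interior L f h a b t : 0 <= L -> lipschitz L f ->
  (forall t, h <= f t <-> a <= t <= b) -> h < f t -> a < t < b.
Proof.
  intros HL Hf Hab Ht.
  set (d := (f t - h) / (L + 1)).
  assert (Hd : 0 < d) by (apply Rdiv_lt_0_compat; lra).
  assert (Hnear : forall t', Rabs (t' - t) <= d -> h <= f t').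
  { intros t' Ht'. assert (H := Hf t t'). rewrite Rabs_minus_sym in Ht'.
    assert (Hr := Rle_abs (f t - f t')).
    assert (L * d < f t - h) by (apply mul_lt_of_le_div; unfold d; lra).
    assert (L * Rabs (t - t') <= L * d) by (apply Rmult_le_compat_l; lra). lra. }
  assert (H1 : a <= t - d <= b) by (apply Hab, Hnear; rewrite Rabs_left; lra).
  assert (H2 : a <= t + d <= b) by (apply Hab, Hnear; rewrite Rabs_right; lra).
  lra.
Qed.

Lemma lipschitz_max_lt L f p r c : 0 <= L -> lipschitz L f ->
  (forall t, p <= t <= r -> f t < c) -> exists eta, 0 < eta /\ forall t, p <= t <= r -> f t <= c - eta.
Proof.
  intros HL Hf Hc. destruct (Rle_or_lt p r) as [Hpr | Hpr]; [| exists 1; split; intros; lra].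
  destruct (continuity_ab_maj f p r Hpr) as [M [HM HMr]]; [intros; apply (lipschitz_continuity_pt L); assumption |].
  exists (c - f M). split; [specialize (Hc M HMr); lra |]. intros t Ht; specialize (HM t Ht); lra.
Qed.

Lemma lipschitz_min_gt L f p r c : 0 <= L -> lipschitz L f ->
  (forall t, p <= t <= r -> c < f t) -> exists eta, 0 < eta /\ forall t, p <= t <= r -> c + eta <= f t.
Proof.
  intros HL Hf Hc.
  destruct (lipschitz_max_lt L (fun t => - f t) p r (- c)) as [eta [Heta H]]; [exact HL | | |].
  - intros t t'. replace (- f t - - f t') with (- (f t - f t')) by ring. rewrite Rabs_Ropp. apply Hf.
  - intros t Ht. specialize (Hc t Ht). lra.
  - exists eta. split; [exact Heta |]. intros t Ht. specialize (H t Ht). lra.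
Qed.

(** * The sections [l(x) ∩ V_k(h)] *)

Definition line_point (k : nat -> Z) (x : nat -> R) (t : R) : nat -> R :=
  fun j => x j + t - 2 * PI * IZR (k j).

Definition profile (m : nat) (k : nat -> Z) (x : nat -> R) (t : R) : R :=
  prod_s_trunc m (line_point k x t).

Definition profile_lip (m : nat) : R := 2 ^ m * INR m.

Lemma profile_lip_nonneg m : 0 <= profile_lip m.
Proof. apply Rmult_le_pos; [apply pow_le; lra | apply pos_INR]. Qed.

Lemma Vk_shift_iff m h k x t : 0 < h -> Vk m h k (shift x t) <-> h <= profile m k x t.
Proof. apply V0_iff. Qed.

Lemma profile_lipschitz m k x : lipschitz (profile_lip m) (profile m k x).
Proof.
  intros t t'. eapply Rle_trans; [apply prod_s_trunc_lipschitz |]. unfold line_point, profile_lip.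
  rewrite (sumR_ext m _ (fun _ => Rabs (t - t'))) by (intros; f_equal; ring).
  rewrite sumR_const. right; ring.
Qed.

Lemma profile_lipschitz_point m k x y t :
  Rabs (profile m k x t - profile m k y t) <= profile_lip m * p7_dist m x y.
Proof.
  eapply Rle_trans; [apply prod_s_trunc_lipschitz |]. unfold line_point, profile_lip.
  rewrite Rmult_assoc. apply Rmult_le_compat_l; [apply pow_le; lra |].
  rewrite <- sumR_const. apply sumR_le. intros j Hj.
  replace (x j + t - 2 * PI * IZR (k j) - (y j + t - 2 * PI * IZR (k j))) with (x j - y j) by ring.
  apply dist_coord_le, Hj.
Qed.

Lemma profile_uniformly_close m k x y eta : 0 < eta ->
  p7_dist m x y < eta / (profile_lip m + 1) -> forall t, Rabs (profile m k y t - profile m k x t) < eta.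
Proof.
  intros Heta Hd t. rewrite Rabs_minus_sym.
  assert (H := profile_lipschitz_point m k x y t).
  assert (profile_lip m * p7_dist m x y < eta) by (apply mul_lt_of_le_div; [apply profile_lip_nonneg | lra ..]).
  lra.
Qed.

Definition window_start (k : nat -> Z) (x : nat -> R) : R := 2 * PI * IZR (k 0%nat) - x 0%nat.

Lemma profile_pos_window m k x t : (1 <= m)%nat -> 0 < profile m k x t ->
  window_start k x < t < window_start k x + 2 * PI.
Proof.
  intros Hm Hpos. assert (H := prod_s_trunc_pos_coord m _ Hpos 0%nat ltac:(lia)).
  unfold line_point in H. unfold window_start. lra.
Qed.

Lemma line_point_affine k x a b t : a <> b ->
  line_point k x t = comb ((b - t) / (b - a)) (line_point k x a) (line_point k x b).
Proof. intros Hab. apply functional_extensionality; intro j. unfold line_point, comb. field. lra. Qed.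

Lemma line_point_comb k l x y a b :
  line_point k (comb l x y) (l * a + (1 - l) * b) = comb l (line_point k x a) (line_point k y b).
Proof. apply functional_extensionality; intro j. unfold line_point, comb. ring. Qed.

Lemma profile_gt_between m k x c a b t : (1 <= m)%nat -> 0 < c ->
  c <= profile m k x a -> c <= profile m k x b -> a < t < b -> c < profile m k x t.
Proof.
  intros Hm Hc Ha Hb Ht. unfold profile. rewrite (line_point_affine k x a b t) by lra.
  apply prod_s_trunc_comb_gt; auto.
  - split; [apply Rdiv_lt_0_compat; lra |].
    apply (Rmult_lt_reg_r (b - a)); [lra |]. field_simplify; lra.
  - exists 0%nat; split; [lia |]. unfold line_point. lra.
Qed.

Lemma profile_superlevel_interval m k x h : (1 <= m)%nat -> 0 < h ->
  (exists t, h <= profile m k x t) ->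
  exists a b, a <= b /\ forall t, h <= profile m k x t <-> a <= t <= b.
Proof.
  intros Hm Hh. apply (closed_convex_bounded_interval _ (window_start k x) (window_start k x + 2 * PI)).
  - apply (lipschitz_superlevel_closed (profile_lip m)); [apply profile_lip_nonneg | apply profile_lipschitz].
  - intros a b t Ha Hb Ht.
    destruct (Req_dec t a) as [-> | Hta]; [exact Ha |].
    destruct (Req_dec t b) as [-> | Htb]; [exact Hb |].
    left. apply (profile_gt_between m k x h a b); auto. lra.
  - intros t Ht. assert (H := profile_pos_window m k x t Hm ltac:(lra)). lra.
Qed.

Lemma profile_superlevel_shape m k x h : (1 <= m)%nat -> 0 < h ->
  (forall t, ~ h <= profile m k x t) \/
  exists a b, a <= b /\ forall t, h <= profile m k x t <-> a <= t <= b.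
Proof.
  intros Hm Hh. destruct (classic (exists t, h <= profile m k x t)) as [Hex | Hnex].
  - right. apply profile_superlevel_interval; assumption.
  - left. intros t Ht. apply Hnex. exists t; exact Ht.
Qed.

Lemma tau_eq m h k x : 0 < h ->
  tau m h k x = sqrt (INR m) * lebesgue1 (fun t => h <= profile m k x t).
Proof.
  intros Hh. unfold tau. do 2 f_equal. apply functional_extensionality; intro t.
  apply propositional_extensionality, Vk_shift_iff, Hh.
Qed.

Lemma tau_interval m h k x a b : 0 < h -> a <= b ->
  (forall t, h <= profile m k x t <-> a <= t <= b) -> tau m h k x = sqrt (INR m) * (b - a).
Proof. intros Hh Hab H. rewrite tau_eq by exact Hh. f_equal. apply lebesgue1_interval; assumption. Qed.

Lemma supp_tau_iff m h k x : 0 < h ->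
  supp_tau m h k x <-> Hyp m x /\ exists t, h <= profile m k x t.
Proof.
  intros Hh. unfold supp_tau.
  split; intros [Hx [t Ht]]; split; auto; exists t; apply (Vk_shift_iff m h k x t Hh); exact Ht.
Qed.

Lemma Hyp_comb m l x y : Hyp m x -> Hyp m y -> Hyp m (comb l x y).
Proof.
  intros [Vx Sx] [Vy Sy]. split.
  - intros j Hj. unfold comb. rewrite Vx, Vy by exact Hj. ring.
  - unfold comb. rewrite sumR_lin, Sx, Sy. ring.
Qed.

(* Two lines [l(x)], [l(y)] with [x <> y] in [H] are disjoint, since [H] meets
   each line [x + R E] exactly once. *)
Lemma line_points_differ m k x y a b : (1 <= m)%nat -> Hyp m x -> Hyp m y -> x <> y ->
  exists j, (j < m)%nat /\ line_point k x a j <> line_point k y b j.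
Proof.
  intros Hm [Vx Sx] [Vy Sy] Hxy. apply NNPP; intro Hn.
  assert (Heq : forall j, (j < m)%nat -> x j = y j + (b - a)).
  { intros j Hj. apply NNPP; intro Hne. apply Hn. exists j; split; [exact Hj |].
    unfold line_point. intro E; apply Hne; lra. }
  assert (Hs : sumR m x = sumR m y + INR m * (b - a)).
  { rewrite <- sumR_const, <- (Rmult_1_l (sumR m y)), <- (Rmult_1_l (sumR m (fun _ => b - a))), <- sumR_lin.
    apply sumR_ext. intros j Hj. rewrite Heq by exact Hj. ring. }
  rewrite Sx, Sy in Hs.
  assert (0 < INR m) by (apply lt_0_INR; lia).
  assert (b - a = 0) by nra.
  apply Hxy, functional_extensionality; intro j.
  destruct (lt_dec j m) as [Hj | Hj].
  - rewrite Heq by exact Hj. lra.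
  - rewrite Vx, Vy by lia; reflexivity.
Qed.

Lemma rel_interior_of_profile_gt m h k x t : 0 < h -> Hyp m x -> h < profile m k x t ->
  p7_rel_interior m (supp_tau m h k) x.
Proof.
  intros Hh Hx Ht. split; [apply supp_tau_iff; [exact Hh | split; [exact Hx | exists t; lra]] |].
  assert (HL := profile_lip_nonneg m).
  exists ((profile m k x t - h) / (profile_lip m + 1)). split; [apply Rlt_gt, Rdiv_lt_0_compat; lra |].
  intros y Hy Hd. apply supp_tau_iff; [exact Hh |]. split; [exact Hy | exists t].
  assert (H := profile_uniformly_close m k x y (profile m k x t - h) ltac:(lra) Hd t).
  apply Rabs_def2 in H. lra.
Qed.

Section SupportGeometry.

Variables (m : nat) (h : R) (k : nat -> Z).
Hypotheses (Hm : (1 <= m)%nat) (Hh : 0 < h).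

Lemma tau_nonneg x : supp_tau m h k x -> 0 <= tau m h k x.
Proof.
  intros Hx. apply supp_tau_iff in Hx as [_ Hex]; [| exact Hh].
  destruct (profile_superlevel_interval m k x h Hm Hh Hex) as [a [b [Hab HI]]].
  rewrite (tau_interval m h k x a b Hh Hab HI). apply Rmult_le_pos; [apply sqrt_pos | lra].
Qed.

Lemma supp_tau_convex : p7_convex (supp_tau m h k).
Proof.
  intros x y l Hx Hy Hl.
  apply supp_tau_iff in Hx as [Hx [ta Ha]]; [| exact Hh]. apply supp_tau_iff in Hy as [Hy [tb Hb]]; [| exact Hh].
  apply supp_tau_iff; [exact Hh |]. split; [apply Hyp_comb; assumption |].
  exists (l * ta + (1 - l) * tb). unfold profile. rewrite line_point_comb.
  apply prod_s_trunc_comb_ge; assumption.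
Qed.

Lemma supp_tau_strictly_convex : p7_strictly_convex m (supp_tau m h k).
Proof.
  split; [exact supp_tau_convex |].
  intros x y l Hx Hy Hxy Hl.
  apply supp_tau_iff in Hx as [Hx [ta Ha]]; [| exact Hh]. apply supp_tau_iff in Hy as [Hy [tb Hb]]; [| exact Hh].
  apply (rel_interior_of_profile_gt m h k _ (l * ta + (1 - l) * tb) Hh (Hyp_comb m l x y Hx Hy)).
  unfold profile. rewrite line_point_comb.
  apply prod_s_trunc_comb_gt; auto. apply line_points_differ; auto.
Qed.

(* The combinations of the endpoints of the two sections lie strictly inside
   the section at the combined point. *)
Lemma tau_strictly_concave : p7_strictly_concave_on m (supp_tau m h k) (tau m h k).
Proof.
  intros x y l Hx Hy Hxy Hl.
  apply supp_tau_iff in Hx as [Hx Ex]; [| exact Hh]. apply supp_tau_iff in Hy as [Hy Ey]; [| exact Hh].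
  destruct (profile_superlevel_interval m k x h Hm Hh Ex) as [ax [bx [Habx HIx]]].
  destruct (profile_superlevel_interval m k y h Hm Hh Ey) as [ay [by_ [Haby HIy]]].
  rewrite (tau_interval m h k x ax bx Hh Habx HIx), (tau_interval m h k y ay by_ Hh Haby HIy).
  set (z := comb l x y).
  assert (Hinside : forall tx ty, h <= profile m k x tx -> h <= profile m k y ty ->
                      h < profile m k z (l * tx + (1 - l) * ty)).
  { intros tx ty Htx Hty. unfold z, profile. rewrite line_point_comb.
    apply prod_s_trunc_comb_gt; auto. apply line_points_differ; auto. }
  assert (Qa := Hinside ax ay ltac:(apply HIx; lra) ltac:(apply HIy; lra)).
  assert (Qb := Hinside bx by_ ltac:(apply HIx; lra) ltac:(apply HIy; lra)).
  destruct (profile_superlevel_interval m k z h Hm Hh (ex_intro _ (l * ax + (1 - l) * ay) (Rlt_le _ _ Qa))) as [az [bz [Habz HIz]]].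
  rewrite (tau_interval m h k z az bz Hh Habz HIz).
  assert (Hinterior : forall t, h < profile m k z t -> az < t < bz).
  { intros t. apply (lipschitz_superlevel_interior (profile_lip m));
      [apply profile_lip_nonneg | apply profile_lipschitz | exact HIz]. }
  assert (H1 := Hinterior _ Qa). assert (H2 := Hinterior _ Qb).
  assert (Hs : 0 < sqrt (INR m)) by (apply sqrt_lt_R0, lt_0_INR; lia).
  apply Rlt_gt.
  replace (l * (sqrt (INR m) * (bx - ax)) + (1 - l) * (sqrt (INR m) * (by_ - ay)))
    with (sqrt (INR m) * ((l * bx + (1 - l) * by_) - (l * ax + (1 - l) * ay))) by ring.
  apply Rmult_lt_compat_l; lra.
Qed.

End SupportGeometry.

(* The point [x0 = 2 pi k - (2 pi K / m) E], [K = sum_j k_j], lies in [H], and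
   [l(x0)] passes through [2 pi k + pi E], where the product of the sines is
   [2^m > h]. *)
Lemma supp_tau_full_dim m h k : (1 <= m)%nat -> 0 < h < 2 ^ m -> p7_full_dim_in_H m (supp_tau m h k).
Proof.
  intros Hm Hh. split; [intros x Hx; apply Hx |].
  set (K := sumR m (fun j => IZR (k j))).
  assert (Hm0 : 0 < INR m) by (apply lt_0_INR; lia).
  set (x0 := fun j => if lt_dec j m then 2 * PI * IZR (k j) - 2 * PI * K / INR m else 0).
  exists x0. apply (rel_interior_of_profile_gt m h k x0 (PI + 2 * PI * K / INR m)); [lra | split |].
  - intros j Hj. unfold x0. destruct (lt_dec j m); [lia | reflexivity].
  - rewrite (sumR_ext m _ (fun j => (2 * PI) * IZR (k j) + (- (2 * PI * K / INR m)) * 1)).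
    + rewrite sumR_lin, sumR_const. fold K. field. lra.
    + intros j Hj. unfold x0. destruct (lt_dec j m); [ring | lia].
  - unfold profile, prod_s_trunc. rewrite (prodR_ext m _ (fun _ => 2)), prodR_const; [lra |].
    intros j Hj. unfold line_point, x0. destruct (lt_dec j m); [| lia].
    replace (2 * PI * IZR (k j) - 2 * PI * K / INR m + (PI + 2 * PI * K / INR m) - 2 * PI * IZR (k j))
      with PI by (field; lra).
    assert (HPI := PI_RGT_0). rewrite s_trunc_in by lra. unfold s.
    rewrite sin_PI2. ring.
Qed.

(** * Compactness of the support *)

Lemma Un_cv_const c : Un_cv (fun _ => c) c.
Proof. intros e He; exists O; intros n _; unfold Rdist; rewrite Rminus_diag, Rabs_R0; lra. Qed.

Lemma Un_cv_squeeze (u : nat -> R) l (e : nat -> R) :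
  (forall n, Rabs (u n - l) <= e n) -> Un_cv e 0 -> Un_cv u l.
Proof.
  intros H He eps Heps. destruct (He eps Heps) as [N HN]. exists N. intros n Hn.
  specialize (HN n Hn). unfold Rdist in *. rewrite Rminus_0_r in HN.
  eapply Rle_lt_trans; [apply H | eapply Rle_lt_trans; [apply Rle_abs | exact HN]].
Qed.

Lemma Un_cv_subseq (u : nat -> R) l phi : (forall n, (phi n < phi (S n))%nat) ->
  Un_cv u l -> Un_cv (fun n => u (phi n)) l.
Proof.
  intros Hphi Hu e He. destruct (Hu e He) as [N HN]. exists N. intros n Hn. apply HN.
  assert (Hge : forall n, (n <= phi n)%nat) by (induction n0; [lia | specialize (Hphi n0); lia]).
  specialize (Hge n). lia.
Qed.

Lemma bolzano_weierstrass_seq (u : nat -> R) B : (forall n, Rabs (u n) <= B) ->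
  exists phi l, (forall n, (phi n < phi (S n))%nat) /\ Un_cv (fun n => u (phi n)) l.
Proof.
  intros Hb.
  destruct (Bolzano_Weierstrass u (fun c => - B <= c <= B) (compact_P3 (- B) B)) as [l Hl].
  { intro n. specialize (Hb n). assert (H1 := Rle_abs (u n)). assert (H2 := Rle_abs (- u n)).
    rewrite Rabs_Ropp in H2. lra. }
  destruct (choice (fun Nn p => (fst Nn <= p)%nat /\ Rabs (u p - l) < RinvN (snd Nn))) as [g Hg].
  { intros [N n]. apply (Hl (fun y => Rabs (y - l) < RinvN n) N). exists (RinvN n). intros y Hy; exact Hy. }
  set (phi := fix phi n := match n with O => g (O, O) | S n' => g (S (phi n'), S n') end).
  exists phi, l. split.
  - intro n. destruct (Hg (S (phi n), S n)) as [H _]. simpl in H. simpl. lia.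
  - apply (Un_cv_squeeze _ _ (fun n => RinvN n)); [| exact RinvN_cv].
    intros [|n]; left; [apply (Hg (O, O)) | apply (Hg (S (phi n), S n))].
Qed.

Lemma bolzano_weierstrass_vec M (v : nat -> nat -> R) B :
  (forall n j, (j < M)%nat -> Rabs (v n j) <= B) ->
  exists phi lim, (forall n, (phi n < phi (S n))%nat) /\
    forall j, (j < M)%nat -> Un_cv (fun n => v (phi n) j) (lim j).
Proof.
  revert v. induction M as [|M IH]; intros v Hb.
  - exists (fun n => n), (fun _ => 0). split; [intros; lia | intros; lia].
  - destruct (IH v ltac:(intros; apply Hb; lia)) as [phi [lim [Hphi Hlim]]].
    destruct (bolzano_weierstrass_seq (fun n => v (phi n) M) B ltac:(intros; apply Hb; lia))
      as [psi [l [Hpsi Hl]]].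
    exists (fun n => phi (psi n)), (fun j => if Nat.eq_dec j M then l else lim j). split.
    + assert (Hmono : forall a b, (a < b)%nat -> (phi a < phi b)%nat)
        by (intros a b Hab; induction Hab; [apply Hphi | specialize (Hphi m); lia]).
      intro n. apply Hmono, Hpsi.
    + intros j Hj. destruct (Nat.eq_dec j M) as [-> | Hne]; [exact Hl |].
      apply (Un_cv_subseq (fun n => v (phi n) j)); [exact Hpsi | apply Hlim; lia].
Qed.

Lemma Un_cv_sumR M (f : nat -> nat -> R) l :
  (forall j, (j < M)%nat -> Un_cv (fun n => f n j) (l j)) -> Un_cv (fun n => sumR M (f n)) (sumR M l).
Proof.
  induction M as [|M IH]; intros H; simpl; [apply Un_cv_const |].
  apply CV_plus; [apply IH; intros; apply H; lia | apply H; lia].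
Qed.

Lemma Un_cv_sum_abs_diff m (w : nat -> nat -> R) w_lim :
  (forall j, (j < m)%nat -> Un_cv (fun n => w n j) (w_lim j)) ->
  Un_cv (fun n => sumR m (fun j => Rabs (w n j - w_lim j))) 0.
Proof.
  intros H. assert (Hs : Un_cv (fun n => sumR m (fun j => Rabs (w n j - w_lim j))) (sumR m (fun _ => 0))).
  { apply (Un_cv_sumR m (fun n j => Rabs (w n j - w_lim j))). intros j Hj.
    assert (Hj' := cv_cvabs _ _ (CV_minus _ _ _ _ (H j Hj) (Un_cv_const (w_lim j)))).
    rewrite Rminus_diag, Rabs_R0 in Hj'. exact Hj'. }
  rewrite sumR_const, Rmult_0_r in Hs. exact Hs.
Qed.

Lemma p7_seq_converges_of_coords m u x :
  (forall j, (j < m)%nat -> Un_cv (fun n => u n j) (x j)) -> p7_seq_converges m u x.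
Proof.
  intros H eps Heps. destruct (Un_cv_sum_abs_diff m u x H eps Heps) as [N HN]. exists N.
  intros n Hn. specialize (HN n Hn). unfold Rdist in HN. rewrite Rminus_0_r in HN.
  eapply Rle_lt_trans; [apply dist_le_sum_abs | eapply Rle_lt_trans; [apply Rle_abs | exact HN]].
Qed.

Lemma prod_s_trunc_cv m (w : nat -> nat -> R) w_lim :
  (forall j, (j < m)%nat -> Un_cv (fun n => w n j) (w_lim j)) ->
  Un_cv (fun n => prod_s_trunc m (w n)) (prod_s_trunc m w_lim).
Proof.
  intros H. apply (Un_cv_squeeze _ _ (fun n => 2 ^ m * sumR m (fun j => Rabs (w n j - w_lim j)))).
  - intro n. apply prod_s_trunc_lipschitz.
  - rewrite <- (Rmult_0_r (2 ^ m)). apply CV_mult; [apply Un_cv_const | apply Un_cv_sum_abs_diff, H].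
Qed.

Lemma Hyp_of_coord_limit m u x : (forall n, Hyp m (u n)) -> vec m x ->
  (forall j, (j < m)%nat -> Un_cv (fun n => u n j) (x j)) -> Hyp m x.
Proof.
  intros Hu Hx Hcv. split; [exact Hx |].
  apply (UL_sequence (fun n => sumR m (u n))); [apply Un_cv_sumR, Hcv |].
  replace (fun n => sumR m (u n)) with (fun _ : nat => 0); [apply Un_cv_const |].
  apply functional_extensionality; intro n. symmetry. apply Hu.
Qed.

Lemma line_param_bound m k x t : (1 <= m)%nat -> Hyp m x -> 0 < profile m k x t ->
  Rabs t <= 2 * PI + 2 * PI * Rabs (sumR m (fun j => IZR (k j))).
Proof.
  intros Hm [_ Hsum] Hpos. set (K := sumR m (fun j => IZR (k j))).
  assert (Hdom := prod_s_trunc_pos_coord m _ Hpos).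
  assert (Hs : forall n, sumR n (line_point k x t) = sumR n x + INR n * t - 2 * PI * sumR n (fun j => IZR (k j))).
  { induction n as [|n IH]; simpl sumR; [simpl; ring | rewrite IH, S_INR; unfold line_point; ring]. }
  assert (Hlow : 0 <= sumR m (line_point k x t))
    by (apply sumR_nonneg; intros j Hj; specialize (Hdom j Hj); lra).
  assert (Hup : sumR m (line_point k x t) <= INR m * (2 * PI))
    by (rewrite <- sumR_const; apply sumR_le; intros j Hj; specialize (Hdom j Hj); lra).
  rewrite Hs, Hsum in Hlow, Hup. fold K in Hlow, Hup.
  assert (Hm1 : 1 <= INR m) by (apply (le_INR 1); lia).
  assert (HPI := PI_RGT_0).
  assert (HK1 : 2 * PI * Rabs K <= 2 * PI * (INR m * Rabs K))
    by (apply Rmult_le_compat_l; [lra | assert (HK := Rabs_pos K); nra]).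
  assert (HK2 : 2 * PI * K <= 2 * PI * Rabs K) by (apply Rmult_le_compat_l; [lra | apply Rle_abs]).
  assert (HK3 : 2 * PI * - K <= 2 * PI * Rabs K)
    by (apply Rmult_le_compat_l; [lra | rewrite <- Rabs_Ropp; apply Rle_abs]).
  apply (Rmult_le_reg_l (INR m)); [lra |]. rewrite <- (Rabs_right (INR m)) at 1 by lra. rewrite <- Rabs_mult.
  apply Rabs_le. split; lra.
Qed.

(* Extract a subsequence along which both the points [line_point (u n) (t n)]
   of [V_k(h)] (bounded since they lie in [[0, 2 pi]^m]) and the parameters
   [t n] converge; [u n] is then recovered from them. *)
Lemma supp_tau_compact m h k : (1 <= m)%nat -> 0 < h -> p7_compact m (supp_tau m h k).
Proof.
  intros Hm Hh u Hu.
  assert (Hu' : forall n, Hyp m (u n) /\ exists t, h <= profile m k (u n) t)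
    by (intro n; apply supp_tau_iff, Hu; exact Hh).
  assert (HH : forall n, Hyp m (u n)) by (intro n; apply Hu').
  destruct (choice (fun n t => h <= profile m k (u n) t)) as [tn Htn]; [intro n; apply Hu' |].
  set (B := 2 * PI + 2 * PI * Rabs (sumR m (fun j => IZR (k j)))).
  set (v := fun n j => if lt_dec j m then line_point k (u n) (tn n) j else tn n).
  assert (Hb : forall n j, (j < S m)%nat -> Rabs (v n j) <= B).
  { intros n j Hj. assert (Hpos : 0 < profile m k (u n) (tn n)) by (specialize (Htn n); lra).
    assert (HtB := line_param_bound m k (u n) (tn n) Hm (HH n) Hpos).
    unfold v. destruct (lt_dec j m) as [Hjm | Hjm]; [| exact HtB].
    assert (Hdom := prod_s_trunc_pos_coord m _ Hpos j Hjm).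
    assert (0 <= 2 * PI * Rabs (sumR m (fun j => IZR (k j))))
      by (apply Rmult_le_pos; [assert (HPI := PI_RGT_0); lra | apply Rabs_pos]).
    rewrite Rabs_right by lra. unfold B. lra. }
  destruct (bolzano_weierstrass_vec (S m) v B Hb) as [phi [lim [Hphi Hlim]]].
  set (x := fun j => if lt_dec j m then lim j - lim m + 2 * PI * IZR (k j) else 0).
  assert (Hcoord : forall j, (j < m)%nat -> Un_cv (fun n => u (phi n) j) (x j)).
  { intros j Hj.
    replace (fun n => u (phi n) j) with (fun n => v (phi n) j - v (phi n) m + 2 * PI * IZR (k j)).
    - unfold x. destruct (lt_dec j m); [| lia].
      apply CV_plus; [apply CV_minus; apply Hlim; lia | apply Un_cv_const].
    - apply functional_extensionality; intro n. unfold v, line_point.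
      destruct (lt_dec j m); [| lia]. destruct (lt_dec m m); [lia | ring]. }
  exists phi, x. split; [exact Hphi |]. split; [| apply p7_seq_converges_of_coords, Hcoord].
  apply supp_tau_iff; [exact Hh |]. split.
  - apply (Hyp_of_coord_limit m (fun n => u (phi n))); [intro n; apply HH | | exact Hcoord].
    intros j Hj. unfold x. destruct (lt_dec j m); [lia | reflexivity].
  - exists (lim m).
    apply (@Rle_cv_lim (fun _ => h) (fun n => profile m k (u (phi n)) (tn (phi n))));
      [intro n; apply Htn | apply Un_cv_const |].
    apply prod_s_trunc_cv. intros j Hj.
    replace (line_point k x (lim m) j) with (lim j)
      by (unfold line_point, x; destruct (lt_dec j m); [ring | lia]).
    replace (fun n => line_point k (u (phi n)) (tn (phi n)) j) with (fun n => v (phi n) j)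
      by (apply functional_extensionality; intro n; unfold v; destruct (lt_dec j m); [reflexivity | lia]).
    apply Hlim. lia.
Qed.

(** * Continuity of [tau] *)

Lemma lebesgue1_close (A : R -> Prop) a b e : a <= b -> 0 <= e ->
  ((forall t, ~ A t) \/ exists c d, c <= d /\ forall t, A t <-> c <= t <= d) ->
  (forall t, A t -> a - e <= t <= b + e) -> (forall t, a + e <= t <= b - e -> A t) ->
  Rabs (lebesgue1 A - (b - a)) <= 2 * e.
Proof.
  intros Hab He Hshape Hout Hin.
  destruct Hshape as [Hempty | [c [d [Hcd HA]]]].
  - rewrite lebesgue1_empty by exact Hempty.
    assert (b - a <= 2 * e).
    { destruct (Rle_or_lt (b - a) (2 * e)) as [| Hlt]; [assumption |].
      exfalso; apply (Hempty ((a + b) / 2)), Hin; lra. }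
    rewrite Rminus_0_l, Rabs_Ropp, Rabs_right; lra.
  - rewrite (lebesgue1_interval A c d Hcd HA).
    assert (a - e <= c) by (apply (Hout c), HA; lra).
    assert (d <= b + e) by (apply (Hout d), HA; lra).
    apply Rabs_le. split; [| lra].
    destruct (Rle_or_lt (a + e) (b - e)) as [Hw | Hw]; [| lra].
    assert (c <= a + e) by (apply HA, Hin; lra).
    assert (b - e <= d) by (apply HA, Hin; lra). lra.
Qed.

Section SuperlevelPerturbation.

Variables (L : R) (f : R -> R) (p r h : R).
Hypotheses (HL : 0 <= L) (Hf : lipschitz L f) (Hh : 0 < h)
  (Hwindow : forall t, 0 < f t -> p < t < r).

Lemma superlevel_perturb_empty : (forall t, f t < h) ->
  exists eta, 0 < eta /\ forall g : R -> R, (forall t, Rabs (g t - f t) < eta) -> forall t, g t < h.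
Proof.
  intros Hlt. destruct (lipschitz_max_lt L f p r h HL Hf (fun t _ => Hlt t)) as [e0 [He0 H0]].
  exists (Rmin e0 (h / 2)). split; [apply Rmin_pos; lra |].
  assert (E1 := Rmin_l e0 (h / 2)). assert (E2 := Rmin_r e0 (h / 2)).
  intros g Hg t. specialize (Hg t). apply Rabs_def2 in Hg.
  destruct (Rlt_or_le (g t) h) as [| Hge]; [assumption |].
  assert (Hw := Hwindow t ltac:(lra)). specialize (H0 t ltac:(lra)). lra.
Qed.

(* Outside [[a - e, b + e]] (but inside the window) [f] stays below [h] by a
   margin, and on [[a + e, b - e]] above [h] by a margin; [eta] is the
   smallest margin. *)
Lemma superlevel_perturb a b e : 0 < e ->
  (forall t, h <= f t <-> a <= t <= b) -> (forall t, a < t < b -> h < f t) ->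
  exists eta, 0 < eta /\ forall g : R -> R, (forall t, Rabs (g t - f t) < eta) ->
    (forall t, h <= g t -> a - e <= t <= b + e) /\ (forall t, a + e <= t <= b - e -> h <= g t).
Proof.
  intros He HI Hstrict.
  assert (Hout : forall t, ~ a <= t <= b -> f t < h)
    by (intros t Ht; apply Rnot_le_lt; intro H; apply Ht, HI, H).
  destruct (lipschitz_max_lt L f (b + e) r h HL Hf) as [eR [HeR HR]]; [intros t Ht; apply Hout; lra |].
  destruct (lipschitz_max_lt L f p (a - e) h HL Hf) as [eL [HeL HLe]]; [intros t Ht; apply Hout; lra |].
  destruct (lipschitz_min_gt L f (a + e) (b - e) h HL Hf) as [eI [HeI HIn]]; [intros t Ht; apply Hstrict; lra |].
  set (eta := Rmin (Rmin eR eL) (Rmin eI (h / 2))).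
  assert (E1 := Rmin_l (Rmin eR eL) (Rmin eI (h / 2))). assert (E2 := Rmin_r (Rmin eR eL) (Rmin eI (h / 2))).
  assert (E3 := Rmin_l eR eL). assert (E4 := Rmin_r eR eL).
  assert (E5 := Rmin_l eI (h / 2)). assert (E6 := Rmin_r eI (h / 2)). fold eta in E1, E2.
  exists eta. split; [unfold eta; repeat apply Rmin_pos; lra |].
  intros g Hg. split.
  - intros t Ht. assert (Hgt := Hg t). apply Rabs_def2 in Hgt.
    assert (Hw := Hwindow t ltac:(lra)).
    split; apply Rnot_lt_le; intro Hlt; [specialize (HLe t ltac:(lra)) | specialize (HR t ltac:(lra))]; lra.
  - intros t Ht. assert (Hgt := Hg t). apply Rabs_def2 in Hgt. specialize (HIn t Ht). lra.
Qed.

End SuperlevelPerturbation.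

Lemma tau_continuous m h k : (1 <= m)%nat -> 0 < h -> p7_continuous_on_H m (tau m h k).
Proof.
  intros Hm Hh x Hx eps Heps.
  assert (HL := profile_lip_nonneg m).
  assert (Hwindow : forall t, 0 < profile m k x t -> window_start k x < t < window_start k x + 2 * PI)
    by (intros; apply (profile_pos_window m); assumption).
  destruct (profile_superlevel_shape m k x h Hm Hh) as [Hempty | [a [b [Hab HI]]]].
  - destruct (superlevel_perturb_empty (profile_lip m) (profile m k x) _ _ h HL (profile_lipschitz m k x) Hh
                Hwindow) as [eta [Heta Hg]].
    { intro t. apply Rnot_le_lt, Hempty. }
    exists (eta / (profile_lip m + 1)). split; [apply Rlt_gt, Rdiv_lt_0_compat; lra |].
    intros y Hy Hd.
    assert (Hempty_y : forall t, ~ h <= profile m k y t).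
    { intros t Ht. assert (H := Hg (profile m k y) (profile_uniformly_close m k x y eta Heta Hd) t). lra. }
    rewrite !tau_eq, !lebesgue1_empty by assumption.
    rewrite Rminus_diag, Rabs_R0. lra.
  - set (sm := sqrt (INR m)). assert (Hsm : 0 <= sm) by apply sqrt_pos.
    set (e := eps / (2 * (sm + 1))).
    assert (He : 0 < e) by (unfold e; apply Rdiv_lt_0_compat; lra).
    assert (Hsme : sm * (2 * e) < eps) by (apply mul_lt_of_le_div; [lra | lra | right; unfold e; field; lra]).
    destruct (superlevel_perturb (profile_lip m) (profile m k x) _ _ h HL (profile_lipschitz m k x) Hh
                Hwindow a b e He HI) as [eta [Heta Hg]].
    { intros t Ht. apply (profile_gt_between m k x h a b); auto; apply HI; lra. }
    exists (eta / (profile_lip m + 1)). split; [apply Rlt_gt, Rdiv_lt_0_compat; lra |].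
    intros y Hy Hd.
    destruct (Hg (profile m k y)) as [Hout Hin]; [apply profile_uniformly_close; assumption |].
    rewrite (tau_interval m h k x a b Hh Hab HI), tau_eq by exact Hh. fold sm.
    rewrite <- Rmult_minus_distr_l, Rabs_mult, (Rabs_right sm) by lra.
    eapply Rle_lt_trans; [| exact Hsme]. apply Rmult_le_compat_l; [exact Hsm |].
    apply lebesgue1_close; try assumption; [lra | apply profile_superlevel_shape; assumption].
Qed.

Theorem lemma7 (m : nat) (h : R) (k : nat -> Z)
  (hm : (2 <= m)%nat) (hh : 0 < h < 2 ^ m) (hk : k 0%nat = 0%Z) :
  (p7_strictly_convex m (supp_tau m h k) /\
   p7_compact m (supp_tau m h k) /\
   p7_full_dim_in_H m (supp_tau m h k)) /\
  (forall x, supp_tau m h k x -> 0 <= tau m h k x) /\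
  p7_strictly_concave_on m (supp_tau m h k) (tau m h k) /\
  p7_continuous_on_H m (tau m h k).
Proof.
  assert (hm1 : (1 <= m)%nat) by lia.
  assert (hpos : 0 < h) by apply hh.
  split; [split; [| split] | split; [| split]].
  - apply supp_tau_strictly_convex; assumption.
  - apply supp_tau_compact; assumption.
  - apply supp_tau_full_dim; assumption.
  - apply tau_nonneg; assumption.
  - apply tau_strictly_concave; assumption.
  - apply tau_continuous; assumption.
Qed.
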